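(* Let $(X,\leq)$ be a poset and $K$ a field, and let $FI(X,K)$ be the finitary incidence algebra of $X$ over $K$. The following conditions are equivalent: (1) $FI(X,K)$ satisfies a polynomial identity; (2) $FI(X,K)$ is Lie solvable; (3) $FI(X,K)$ is strongly Lie solvable; (4) the group of units $\mathcal{U}(FI(X,K))$ satisfies a group identity; (5) $\mathcal{U}(FI(X,K))$ is solvable; (6) $X$ is bounded.
   Context: The finitary incidence algebra $FI(X,K)$ is the $K$-vector space of formal sums $\alpha=\sum_{x\leq y}\alpha_{xy}e_{xy}$ ($x,y\in X$, $\alpha_{xy}\in K$) such that for every pair $x<y$ there are only finitely many $x\leq u<v\leq y$ with $\alpha_{uv}\neq 0$; the product is the convolution $\alpha\beta=\sum_{x\leq y}\big(\sum_{x\leq z\leq y}\alpha_{xz}\beta_{zy}\big)e_{xy}$, with identity $\delta=\sum_{x\in X}e_{xx}$. For a unital associative algebra $A$, with $[x,y]=xy-yx$ and, for subspaces $U,V$, $UV$ and $[U,V]$ the spans of products and commutators: the Lie derived series is $A^{[0]}=A$, $A^{[n+1]}=[A^{[n]},A^{[n]}]$, and $A$ is Lie solvable if $A^{[n]}=\{0\}$ for some $n$; the series $A^{(0)}=A$, $A^{(n+1)}=[A^{(n)},A^{(n)}]A$ defines strong Lie solvability: $A$ is strongly Lie solvable if $A^{(n)}=\{0\}$ for some $n$. The length of a finite chain $C\subseteq X$ is $|C|-1$; the length $l(X)$ of $X$ is the supremum of lengths of finite chains in $X$; $X$ is bounded if $l(X)<\infty$. A group satisfies a group identity if some nontrivial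 word $w(x_1,\dots,x_n)$ in a free group satisfies $w(g_1,\dots,g_n)=1$ for all elements $g_i$ of the group. *)

From mathcomp Require Import all_boot all_algebra.
From Stdlib Require Import ClassicalEpsilon.
From Stdlib Require List.

Set Implicit Arguments.
Unset Strict Implicit.
Unset Printing Implicit Defensive.

Import GRing.Theory.
Local Open Scope ring_scope.

Section FinitaryIncidence.
Variable K : fieldType.
Variable X : Type.
Variable le : X -> X -> Prop.

Definition lt (x y : X) : Prop := le x y /\ x <> y.

Definition is_poset : Prop :=
  (forall x, le x x) /\
  (forall x y, le x y -> le y x -> x = y) /\
  (forall x y z, le x y -> le y z -> le x z).

(** Ambient space of formal sums: all families (alpha_xy). *)
Definition mat := X -> X -> K.

(** Sum of a finitely supported family (0 if the support is infinite). *)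
Definition fsum {I : Type} (f : I -> K) : K :=
  match excluded_middle_informative
          (exists s : list I, List.NoDup s /\ forall i, f i <> 0 -> List.In i s) with
  | left H => \sum_(i <- proj1_sig (constructive_indefinite_description _ H)) f i
  | right _ => 0
  end.

Definition FI (a : mat) : Prop :=
  (forall x y, ~ le x y -> a x y = 0) /\
  (forall x y, lt x y ->
     exists s : list (X * X), forall u v,
       le x u -> lt u v -> le v y -> a u v <> 0 -> List.In (u, v) s).

Definition mzero : mat := fun _ _ => 0.
Definition madd (a b : mat) : mat := fun x y => a x y + b x y.
Definition mscale (k : K) (a : mat) : mat := fun x y => k * a x y.
(** Convolution; for a, b in FI the summand vanishes unless x <= z <= y. *)
Definition mmul (a b : mat) : mat := fun x y => fsum (fun z => a x z * b z y).
Definition mone : mat :=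
  fun x y => if excluded_middle_informative (x = y) then 1 else 0.
Definition mcomm (a b : mat) : mat := madd (mmul a b) (mscale (-1) (mmul b a)).

Inductive span (S : mat -> Prop) : mat -> Prop :=
  | span0 : span S mzero
  | spanS a : S a -> span S a
  | spanD a b : span S a -> span S b -> span S (madd a b)
  | spanZ k a : span S a -> span S (mscale k a).

(** A nonzero noncommutative polynomial in
    K<x_0, x_1, ...> is a nonempty list of (coefficient, monomial) pairs
    with pairwise distinct monomials and nonzero coefficients. *)
Definition mword (a : nat -> mat) (w : seq nat) : mat :=
  foldr (fun i acc => mmul (a i) acc) mone w.

Definition ncpoly_nonzero (f : seq (K * seq nat)) : bool :=
  [&& f != [::], uniq (map snd f) & all (fun p => p.1 != 0) f].

Definition ncpoly_eval (f : seq (K * seq nat)) (a : nat -> mat) : mat :=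
  foldr (fun p acc => madd (mscale p.1 (mword a p.2)) acc) mzero f.

Definition FI_PI : Prop :=
  exists f, ncpoly_nonzero f /\
    forall a : nat -> mat, (forall i, FI (a i)) -> ncpoly_eval f a = mzero.

Fixpoint lie_der (n : nat) : mat -> Prop :=
  match n with
  | 0 => FI
  | n'.+1 => span (fun c => exists a b, lie_der n' a /\ lie_der n' b /\ c = mcomm a b)
  end.

Definition FI_lie_solvable : Prop :=
  exists n, forall c, lie_der n c -> c = mzero.

Fixpoint slie_der (n : nat) : mat -> Prop :=
  match n with
  | 0 => FI
  | n'.+1 =>
      span (fun c => exists u a,
              span (fun d => exists p q, slie_der n' p /\ slie_der n' q /\ d = mcomm p q) u
              /\ FI a /\ c = mmul u a)
  end.

Definition FI_strongly_lie_solvable : Prop :=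
  exists n, forall c, slie_der n c -> c = mzero.

Definition inverse_pair (a b : mat) : Prop :=
  FI a /\ FI b /\ mmul a b = mone /\ mmul b a = mone.

Definition FI_unit (a : mat) : Prop := exists b, inverse_pair a b.

(** (4) Group identity.  A word in the free group on x_0, x_1, ... is a list
    of letters (i, false) = x_i, (i, true) = x_i^{-1}; it is nontrivial iff
    it is nonempty and reduced. *)
Fixpoint reduced_word (w : seq (nat * bool)) : bool :=
  match w with
  | p :: ((q :: _) as t) => ~~ ((p.1 == q.1) && (p.2 != q.2)) && reduced_word t
  | _ => true
  end.

(** Evaluation of a word: g i is the value of x_i and h i its inverse. *)
Definition gword (g h : nat -> mat) (w : seq (nat * bool)) : mat :=
  foldr (fun p acc => mmul (if p.2 then h p.1 else g p.1) acc) mone w.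

Definition units_group_identity : Prop :=
  exists w, w != [::] /\ reduced_word w /\
    forall g h : nat -> mat, (forall i, inverse_pair (g i) (h i)) ->
      gword g h w = mone.

Inductive gen_subgroup (S : mat -> Prop) : mat -> Prop :=
  | gs_one : gen_subgroup S mone
  | gs_base a : S a -> gen_subgroup S a
  | gs_mul a b : gen_subgroup S a -> gen_subgroup S b -> gen_subgroup S (mmul a b)
  | gs_inv a b : gen_subgroup S a -> inverse_pair a b -> gen_subgroup S b.

Fixpoint unit_der (n : nat) : mat -> Prop :=
  match n with
  | 0 => FI_unit
  | n'.+1 =>
      gen_subgroup (fun c => exists x y x' y',
        unit_der n' x /\ unit_der n' y /\ inverse_pair x x' /\ inverse_pair y y' /\
        c = mmul (mmul (mmul x' y') x) y)
  end.

Definition units_solvable : Prop :=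
  exists n, forall c, unit_der n c -> c = mone.

(** (6) Boundedness: finite chains (duplicate-free lists of pairwise
    comparable elements) have uniformly bounded length |C| - 1. *)
Definition poset_bounded : Prop :=
  exists N : nat, forall s : seq X,
    List.NoDup s ->
    (forall a b, List.In a s -> List.In b s -> le a b \/ le b a) ->
    ((size s).-1 <= N)%N.

End FinitaryIncidence.

From Pilot Require Import Defs.
From mathcomp Require Import all_boot all_algebra ring.
From Stdlib Require Import ClassicalEpsilon FunctionalExtensionality Classical.
From Stdlib Require List Permutation FinFun.

(* Let J_k consist of the elements of FI(X,K) supported on pairs (x, y) joined by a
   chain x = x_0 < x_1 < ... < x_k <= y. Then J_j J_k is contained in J_(j+k); the
   commutator of two elements of J_k lies in J_(k+1), because diagonal entries multiply
   like scalars; and the group commutator of two units in 1 + J_k lies in 1 + J_(k+1)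
   (in 1 + J_1 for arbitrary units). If all chains are shorter than N then J_N = 0, so
   both Lie derived series and the derived series of the unit group vanish after N
   steps, and the product of commutators [x_0, x_1] ... [x_(2N-2), x_(2N-1)] is a
   polynomial identity; a solvable unit group satisfies an iterated commutator word.

   Conversely, a long chain c_0 < ... < c_m carries a copy of the upper triangular
   (m+1) x (m+1) matrices. The matrix units along a chain of length 2^n survive n
   steps of the Lie derived series; shift matrices substituted into a nonzero polynomial
   isolate the coefficient of one of its monomials in the corner entry (0, m); and a
   reduced group word w of length L, evaluated at suitable unipotent matrices with
   m = 2L, has corner entry (-1)^L. *)

Set Implicit Arguments.
Unset Strict Implicit.
Unset Printing Implicit Defensive.
Import GRing.Theory.
Local Open Scope ring_scope.

Section FiniteSums.
Variable K : fieldType.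

Lemma big_Permutation (I : Type) (F : I -> K) s1 s2 :
  Permutation.Permutation s1 s2 -> \sum_(i <- s1) F i = \sum_(i <- s2) F i.
Proof.
elim=> [|x l l' _ IH|x y l|l l' l'' _ IH1 _ IH2] //.
- by rewrite !big_cons IH.
- by rewrite !big_cons addrCA.
- by rewrite IH1 IH2.
Qed.

Lemma big_filter_neq0 (I : Type) (F : I -> K) (s : seq I) :
  \sum_(i <- s) F i = \sum_(i <- [seq i <- s | F i != 0]) F i.
Proof.
elim: s => [|a s IH] //=; rewrite big_cons IH.
by case: (eqVneq (F a) 0) => [->|_] /=; rewrite ?add0r ?big_cons.
Qed.

Lemma In_filter (I : Type) (p : pred I) (s : seq I) i :
  List.In i (filter p s) <-> List.In i s /\ p i.
Proof.
elim: s => [|a s IH] /=; first by split => [[]|[]].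
case Hp: (p a) => /=; split.
- by case=> [<-|/IH []]; [split; [left|]|split; [right|]].
- by case=> [[<-|Hi] pi]; [left|right; apply/IH].
- by move/IH => [Hi pi]; split; [right|].
- by case=> [[<-|Hi] pi]; [rewrite Hp in pi|apply/IH].
Qed.

Lemma NoDup_filter (I : Type) (p : pred I) (s : seq I) :
  List.NoDup s -> List.NoDup (filter p s).
Proof.
elim: s => [|a s IH] //= nd; inversion nd; subst.
case: (p a); last exact: IH.
by constructor; [move/In_filter => []|exact: IH].
Qed.

Lemma big_neq0_In (I : Type) (F : I -> K) (s : seq I) :
  \sum_(i <- s) F i <> 0 -> exists i, List.In i s /\ F i <> 0.
Proof.
elim: s => [|a s IH]; first by rewrite big_nil.
rewrite big_cons; case: (eqVneq (F a) 0) => [->|/eqP Fa] H.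
- by rewrite add0r in H; have [i [Hi Fi]] := IH H; exists i; split; [right|].
- by exists a; split; [left|].
Qed.

Lemma NoDup_cover (I : Type) (s : seq I) :
  exists s', List.NoDup s' /\ forall i, List.In i s -> List.In i s'.
Proof.
pose dec := fun x y : I => excluded_middle_informative (x = y).
exists (List.nodup dec s); split; first exact: List.NoDup_nodup.
by move=> i Hi; apply/List.nodup_In.
Qed.

Lemma fsumE (I : Type) (f : I -> K) (s : seq I) :
  List.NoDup s -> (forall i, f i <> 0 -> List.In i s) ->
  fsum f = \sum_(i <- s) f i.
Proof.
move=> nd cov; rewrite /fsum.
case: excluded_middle_informative => [H|H]; last by case: H; exists s.
case: (constructive_indefinite_description _ H) => s0 [nd0 cov0] /=.
rewrite (big_filter_neq0 f s0) (big_filter_neq0 f s).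
apply: big_Permutation; apply: Permutation.NoDup_Permutation; try exact: NoDup_filter.
by move=> x; rewrite !In_filter; split=> -[_ /eqP fx]; split; try apply/eqP; auto.
Qed.

Lemma fsum_eq0 (I : Type) (f : I -> K) : (forall i, f i = 0) -> fsum f = 0.
Proof. by move=> f0; rewrite (@fsumE _ f [::]) ?big_nil //; constructor. Qed.

Lemma fsum_neq0 (I : Type) (f : I -> K) : fsum f <> 0 -> exists i, f i <> 0.
Proof.
move=> H; apply: NNPP => nf; apply: H; apply: fsum_eq0 => i.
by apply: NNPP => fi; apply: nf; exists i.
Qed.

Lemma fsum_single (I : Type) (f : I -> K) i0 :
  (forall i, i <> i0 -> f i = 0) -> fsum f = f i0.
Proof.
move=> f0; rewrite (@fsumE _ f [:: i0]).
- by rewrite big_cons big_nil addr0.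
- by constructor; [case|constructor].
- by move=> i fi; left; apply: NNPP => Ni; apply: fi; apply: f0 => E; apply: Ni.
Qed.

Lemma eq_fsum (I : Type) (f g : I -> K) : (forall i, f i = g i) -> fsum f = fsum g.
Proof. by move=> fg; rewrite (functional_extensionality f g fg). Qed.

Definition finite_support (I : Type) (f : I -> K) :=
  exists s : seq I, forall i, f i <> 0 -> List.In i s.

Lemma fsum_lincomb (I : Type) (f g : I -> K) k :
  finite_support f -> finite_support g ->
  fsum (fun i => f i + k * g i) = fsum f + k * fsum g.
Proof.
move=> [s1 H1] [s2 H2]; have [s [nd cov]] := NoDup_cover (s1 ++ s2).
have cf i : f i <> 0 -> List.In i s by move/H1 => Hi; apply/cov/List.in_or_app; left.
have cg i : g i <> 0 -> List.In i s by move/H2 => Hi; apply/cov/List.in_or_app; right.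
rewrite (fsumE nd cf) (fsumE nd cg) (@fsumE _ _ s nd); first by rewrite big_split mulr_sumr.
move=> i Hi; case: (eqVneq (f i) 0) => [fi|/eqP]; last exact: cf.
by apply: cg => gi; apply: Hi; rewrite fi gi mulr0 addr0.
Qed.

Lemma mulf_neq0_inv (a b : K) : a * b <> 0 -> a <> 0 /\ b <> 0.
Proof. by move=> H; split => E; apply: H; rewrite E ?mul0r ?mulr0. Qed.

End FiniteSums.

Section ListMembership.
Variable T : eqType.

Lemma In_mem (x : T) s : List.In x s -> x \in s.
Proof. by elim: s => [|a s IH] //= [->|/IH]; rewrite inE ?eqxx // => ->; rewrite orbT. Qed.

Lemma mem_In (x : T) s : x \in s -> List.In x s.
Proof. by elim: s => [|a s IH] //; rewrite inE => /orP [/eqP ->|/IH]; [left|right]. Qed.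

Lemma uniq_NoDup (s : seq T) : uniq s -> List.NoDup s.
Proof.
elim: s => [|a s IH] /=; first by constructor.
by case/andP => /negP Na /IH; constructor => // /In_mem.
Qed.

End ListMembership.

Lemma fsum_image (K : fieldType) (I : finType) (X : Type) (f : I -> X) (F : X -> K) :
  injective f -> (forall x, F x <> 0 -> exists i, f i = x) ->
  fsum F = \sum_i F (f i).
Proof.
move=> f_inj F_im; rewrite (@fsumE _ _ _ [seq f i | i <- index_enum I]) ?big_map //.
  exact/(FinFun.Injective_map_NoDup f_inj)/uniq_NoDup/index_enum_uniq.
by move=> x /F_im [i <-]; apply/List.in_map/mem_In; rewrite mem_index_enum.
Qed.

Section TriangularMatrices.
Variables (K : fieldType) (n : nat).
Local Notation MX := 'M[K]_n.+1.

Lemma mulmx_neq0 (A B : MX) p q :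
  (A *m B) p q != 0 -> exists r, A p r != 0 /\ B r q != 0.
Proof.
rewrite mxE => /eqP /big_neq0_In [r [_ /mulf_neq0_inv [H1 H2]]].
by exists r; split; apply/eqP.
Qed.

Lemma big_ord_single (F : 'I_n.+1 -> K) t0 :
  (forall t, t != t0 -> F t = 0) -> \sum_t F t = F t0.
Proof. by move=> F0; apply: big_only1 => // t /F0. Qed.

Definition upper_mx (A : MX) := forall p q : 'I_n.+1, A p q != 0 -> (p <= q)%N.

Lemma upper_mx1 : upper_mx 1%:M.
Proof. by move=> p q; rewrite mxE; case: (eqVneq p q) => [->|_]; rewrite ?leqnn ?eqxx. Qed.

Lemma upper_mxD (A B : MX) : upper_mx A -> upper_mx B -> upper_mx (A + B).
Proof.
move=> UA UB p q; rewrite mxE; case: (eqVneq (A p q) 0) => [->|/UA //].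
by rewrite add0r => /UB.
Qed.

Lemma upper_mxN (A : MX) : upper_mx A -> upper_mx (- A).
Proof. by move=> UA p q; rewrite mxE oppr_eq0 => /UA. Qed.

Lemma upper_mxM (A B : MX) : upper_mx A -> upper_mx B -> upper_mx (A *m B).
Proof.
move=> UA UB p q /mulmx_neq0 [r [/UA pr /UB rq]]; exact: leq_trans pr rq.
Qed.

Definition band_mx d (A : MX) := forall p q : 'I_n.+1, A p q != 0 -> (q <= p + d)%N.

Lemma band_mx1 d : band_mx d 1%:M.
Proof.
by move=> p q; rewrite mxE; case: (eqVneq p q) => [->|_]; rewrite ?leq_addr ?eqxx.
Qed.

Lemma band_mxD d (A B : MX) : band_mx d A -> band_mx d B -> band_mx d (A + B).
Proof.
move=> BA BB p q; rewrite mxE; case: (eqVneq (A p q) 0) => [->|/BA //].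
by rewrite add0r => /BB.
Qed.

Lemma band_mxN d (A : MX) : band_mx d A -> band_mx d (- A).
Proof. by move=> BA p q; rewrite mxE oppr_eq0 => /BA. Qed.

Lemma band_mxM d1 d2 (A B : MX) :
  band_mx d1 A -> band_mx d2 B -> band_mx (d1 + d2) (A *m B).
Proof.
move=> BA BB p q /mulmx_neq0 [r [/BA pr /BB rq]].
by apply: leq_trans rq _; rewrite addnA leq_add2r.
Qed.

End TriangularMatrices.

Section FreeGroupWords.
Local Open Scope nat_scope.

Definition letter_inv (l : nat * bool) : nat * bool := (l.1, ~~ l.2).
Definition word_inv (w : seq (nat * bool)) := rev (map letter_inv w).
Definition noncancelling (l l' : nat * bool) : bool :=
  ~~ ((l.1 == l'.1) && (l.2 != l'.2)).

Lemma letter_invK : involutive letter_inv.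
Proof. by case=> i b; rewrite /letter_inv negbK. Qed.

Lemma letter_inv_neq l : letter_inv l != l.
Proof. by case: l => i [] /=; rewrite /letter_inv -pair_eqE /= eqxx. Qed.

Lemma reduced_wordE w : reduced_word w = sorted noncancelling w.
Proof. by elim: w => [|l w IH] //=; case: w IH => [|l' w] //= ->. Qed.

Lemma sorted_word_inv w :
  sorted noncancelling w -> sorted noncancelling (word_inv w).
Proof.
rewrite /word_inv rev_sorted sorted_map; case: w => [|l w] //=.
rewrite (@eq_path _ _ noncancelling) // => -[i b] [j c].
by rewrite /relpre /noncancelling /letter_inv /= (eq_sym j i) (inj_eq negb_inj) (eq_sym c b).
Qed.

Lemma mem_word_inv w l : (l \in word_inv w) = (letter_inv l \in w).
Proof. by rewrite mem_rev -{1}(letter_invK l) (mem_map (can_inj letter_invK)). Qed.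

Lemma sorted_noncancelling_cat (s1 s2 : seq (nat * bool)) :
  sorted noncancelling s1 -> sorted noncancelling s2 ->
  (forall a s b t, s1 = a :: s -> s2 = b :: t -> (last a s).1 != b.1) ->
  sorted noncancelling (s1 ++ s2).
Proof.
case: s1 => [|a s] //= S1; case: s2 => [|b t] /= S2 J; first by rewrite cats0.
by rewrite cat_path S1 /= S2 andbT /noncancelling (negbTE (J _ _ _ _ erefl erefl)).
Qed.

Lemma head_cat_mem (T : eqType) (s t u : seq T) b :
  s != [::] -> s ++ t = b :: u -> b \in s.
Proof. by case: s => //= a s _ [-> _]; rewrite mem_head. Qed.

(* The iterated commutator word delta_k on the variables off, ..., off + 2^k - 1:
   delta_0 = x_off and delta_(k+1) = [delta_k, delta_k'] with [u, v] = u^-1 v^-1 u v,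
   delta_k' being delta_k shifted to the next 2^k variables. *)
Fixpoint derived_word (k off : nat) : seq (nat * bool) :=
  if k is k'.+1 then
    word_inv (derived_word k' off) ++ word_inv (derived_word k' (off + 2 ^ k')) ++
    derived_word k' off ++ derived_word k' (off + 2 ^ k')
  else [:: (off, false)].

Lemma derived_word_neq_nil k off : derived_word k off != [::].
Proof.
elim: k off => [|k IH] off //=.
by rewrite -!nilpE !cat_nilp [nilp (derived_word k off)]nilpE (negbTE (IH off)) !andbF.
Qed.

Lemma derived_word_vars k off l :
  l \in derived_word k off -> off <= l.1 < off + 2 ^ k.
Proof.
elim: k off l => [|k IH] off l /=.
  by rewrite inE => /eqP -> /=; rewrite leqnn addn1 ltnSn.
have E : off + 2 ^ k + 2 ^ k = off + 2 ^ k.+1 by rewrite expnS mul2n -addnn addnA.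
have HA l' : l' \in derived_word k off -> off <= l'.1 < off + 2 ^ k.+1.
  by move/IH/andP => [-> /leq_trans]; apply; rewrite -E leq_addr.
have HB l' : l' \in derived_word k (off + 2 ^ k) -> off <= l'.1 < off + 2 ^ k.+1.
  by move/IH/andP => [/(leq_trans (leq_addr _ _)) -> /=]; rewrite E.
by rewrite !mem_cat !mem_word_inv => /or4P [/HA|/HB|/HA|/HB].
Qed.

Lemma derived_word_reduced k off : reduced_word (derived_word k off).
Proof.
rewrite reduced_wordE; elim: k off => [|k IH] off //=.
set A := derived_word k off; set B := derived_word k (off + 2 ^ k).
have D l l' : l \in A -> l' \in B -> l.1 != l'.1.
  move=> /derived_word_vars/andP [_ H1] /derived_word_vars/andP [H2 _].
  by rewrite neq_ltn (leq_trans H1 H2).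
have inv_neq_nil s : s != [::] -> word_inv s != [::].
  by rewrite -!size_eq0 size_rev size_map.
have nilA := derived_word_neq_nil k off.
have nilB := derived_word_neq_nil k (off + 2 ^ k).
have last_mem s a s' : s = a :: s' -> last a s' \in s by move=> ->; apply: mem_last.
apply: sorted_noncancelling_cat; first exact: sorted_word_inv (IH off).
- apply: sorted_noncancelling_cat; first exact: sorted_word_inv (IH _).
  + apply: sorted_noncancelling_cat => [||a s b t EA EB]; try exact: IH.
    by apply: D; [exact: last_mem EA|rewrite EB mem_head].
  + move=> a s b t /last_mem; rewrite mem_word_inv => Hb /(head_cat_mem nilA) Ha.
    by rewrite eq_sym; exact: D Ha Hb.
- move=> a s b t /last_mem; rewrite mem_word_inv => Ha.
  move/(head_cat_mem (inv_neq_nil _ nilB)); rewrite mem_word_inv => Hb.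
  exact: D Ha Hb.
Qed.

End FreeGroupWords.

Section ShiftMatrices.
Variables (K : fieldType) (w0 : seq nat).
Local Notation m := (size w0).

Definition shift_mx (i : nat) : 'M[K]_m.+1 :=
  \matrix_(r, s) (((s : nat) == r.+1) && (nth 0%N w0 r == i))%:R.

Lemma upper_shift_mx i : upper_mx (shift_mx i).
Proof.
move=> p q; rewrite mxE; case: (eqVneq (q : nat) p.+1) => [-> _|_] //=.
by rewrite eqxx.
Qed.

Definition shift_word_mx (w : seq nat) : 'M[K]_m.+1 :=
  foldr (fun i acc => shift_mx i *m acc) 1%:M w.

(* The monomial w0 is the only word whose shift product reaches the corner (0, m). *)
Lemma shift_word_mx_corner w j : (j <= m)%N ->
  shift_word_mx w (inord j) ord_max = (w == drop j w0)%:R.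
Proof.
elim: w j => [|i w IH] j jm /=.
  rewrite mxE -val_eqE /= inordK // [[::] == _]eq_sym -size_eq0 size_drop subn_eq0.
  by rewrite eqn_leq jm.
rewrite mxE; case: (ltnP j m) => jm'; last first.
  have -> : j = m by apply/eqP; rewrite eqn_leq jm.
  rewrite drop_oversize // big1 // => t _; rewrite mxE inordK //.
  by case: eqP => [E|]; [move: (ltn_ord t); rewrite E ltnn|rewrite mul0r].
rewrite (@big_ord_single _ _ _ (inord j.+1)); last first.
  move=> t Nt; rewrite mxE inordK //; case: eqP => [E|]; last by rewrite mul0r.
  by case/eqP: Nt; apply: val_inj; rewrite /= E inordK.
have [jS jS'] : (j < m.+1 /\ j.+1 < m.+1)%N by rewrite !ltnS ltnW.
rewrite !mxE !inordK // eqxx /= IH // (drop_nth 0%N jm').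
by rewrite eqseq_cons eq_sym -natrM mulnb.
Qed.

End ShiftMatrices.

Section LetterMatrices.
Variables (K : fieldType) (w : seq (nat * bool)).
Hypothesis w_reduced : reduced_word w.
Local Notation L := (size w).
Local Notation m := L.*2.
Local Notation MX := 'M[K]_m.+1.
Local Notation "w `_ k" := (nth (0%N, false) w k).

(* Position 2k carries the k-th letter of w and position 2k+1 its inverse;
   since w is reduced, consecutive positions carry different letters. *)
Definition letter_at (t : nat) : nat * bool :=
  if odd t then letter_inv w`_t./2 else w`_t./2.

Lemma letter_at_double k : letter_at k.*2 = w`_k.
Proof. by rewrite /letter_at odd_double doubleK. Qed.

Lemma letter_at_doubleS k : letter_at k.*2.+1 = letter_inv w`_k.
Proof. by rewrite /letter_at /= odd_double /= uphalf_double. Qed.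

Lemma letter_at_neq r : (r.+1 < m)%N -> letter_at r != letter_at r.+1.
Proof.
have [[k ->]|[k ->]] : (exists k, r = k.*2) \/ (exists k, r = k.*2.+1).
- have E := odd_double_half r; case: (odd r) E => /= E; [right|left];
    by exists r./2; rewrite -{1}E.
- by rewrite letter_at_double letter_at_doubleS eq_sym letter_inv_neq.
move=> km; rewrite letter_at_doubleS -doubleS letter_at_double.
have k1 : (k.+1 < L)%N by rewrite -ltn_double doubleS.
move: w_reduced; rewrite reduced_wordE => /(sortedP (0%N, false)) /(_ k k1).
by apply: contra => /eqP <-; rewrite /noncancelling /letter_inv /= eqxx /=; case: (_.2).
Qed.

Definition step_mx (l : nat * bool) : MX :=
  \matrix_(r, s) (((s : nat) == r.+1) && (letter_at r == l))%:R.

Lemma step_mx_neq0 l (r s : 'I_m.+1) :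
  step_mx l r s != 0 -> (s : nat) = r.+1 /\ letter_at r = l.
Proof.
rewrite mxE; case: (eqVneq (s : nat) r.+1) => [->|_] /=; last by rewrite eqxx.
by case: (eqVneq (letter_at r) l) => [->|_] //=; rewrite eqxx.
Qed.

Lemma step_mx_sqr l : step_mx l *m step_mx l = 0.
Proof.
apply/matrixP => r s; rewrite !mxE big1 // => t _.
case: (eqVneq (step_mx l r t) 0) => [->|/step_mx_neq0 [rt lr]]; first by rewrite mul0r.
case: (eqVneq (step_mx l t s) 0) => [->|/step_mx_neq0 [ts lt_]]; first by rewrite mulr0.
have rm : (r.+1 < m)%N by move: (ltn_ord s); rewrite ts rt.
by case/negP: (letter_at_neq rm); rewrite -rt lr lt_.
Qed.

Lemma unipotent_inv (N : MX) : N *m N = 0 ->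
  (1%:M + N) *m (1%:M - N) = 1%:M /\ (1%:M - N) *m (1%:M + N) = 1%:M.
Proof.
rewrite !mulmxE => NN; split.
- by rewrite mulrDl mul1r mulrBr mulr1 NN subr0 subrK.
- by rewrite mulrBl mul1r mulrDr mulr1 NN addr0 addrK.
Qed.

(* Inverse to [letter_mx (letter_inv l)], since (1 + N)(1 - N) = 1 when N^2 = 0. *)
Definition letter_mx (l : nat * bool) : MX :=
  (1%:M + step_mx l) *m (1%:M - step_mx (letter_inv l)).

Lemma letter_mx_inv l : letter_mx l *m letter_mx (letter_inv l) = 1%:M.
Proof.
have [A _] := unipotent_inv (step_mx_sqr l).
have [_ B] := unipotent_inv (step_mx_sqr (letter_inv l)).
rewrite /letter_mx letter_invK !mulmxE in A B *.
by rewrite mulrA -(mulrA (1%:M + _)) B mulr1 A.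
Qed.

Lemma upper_letter_mx l : upper_mx (letter_mx l).
Proof.
have U l' : upper_mx (step_mx l') by move=> p q /step_mx_neq0 [-> _].
apply: upper_mxM; [apply: upper_mxD|apply/upper_mxD/upper_mxN];
  by [apply: upper_mx1|apply: U].
Qed.

Lemma band_letter_mx l : band_mx 2 (letter_mx l).
Proof.
have B l' : band_mx 1 (step_mx l') by move=> p q /step_mx_neq0 [-> _]; rewrite addn1.
apply: (@band_mxM _ _ 1 1); [apply: band_mxD|apply/band_mxD/band_mxN];
  by [apply: band_mx1|apply: B].
Qed.

Lemma letter_mx_corner k : (k < L)%N ->
  letter_mx w`_k (inord k.*2) (inord k.*2.+2) = -1.
Proof.
move=> kL; have k2 : (k.*2.+2 < m.+1)%N by rewrite ltnS -doubleS leq_double.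
have [k0 k1] : (k.*2 < m.+1 /\ k.*2.+1 < m.+1)%N by rewrite !(ltn_trans _ k2).
rewrite mxE (@big_ord_single _ _ _ (inord k.*2.+1)).
  rewrite !mxE -!val_eqE /= !inordK // letter_at_double letter_at_doubleS !eqxx /=.
  by rewrite !(ltn_eqF (ltnSn _)) /= add0r sub0r mul1r.
move=> t Nt; have Nt' : (t : nat) != k.*2.+1.
  by apply: contra Nt => /eqP E; apply/eqP/val_inj; rewrite /= inordK.
rewrite !mxE -!val_eqE /= !inordK // (negbTE Nt') /= addr0.
case: (eqVneq k.*2 t) => [E|]; last by rewrite mul0r.
by rewrite -E (ltn_eqF (leqnSn k.*2.+1)) (gtn_eqF (ltnSn k.*2.+1)) /= subrr mulr0.
Qed.

Definition word_mx (s : seq (nat * bool)) : MX :=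
  foldr (fun l acc => letter_mx l *m acc) 1%:M s.

(* Entries of letter_mx w_k move at most two steps up the band, and the only way to
   climb from row 2k to the last column is through the entries (2j, 2j+2), j >= k. *)
Lemma word_mx_corner d k r : (k + d)%N = L -> (r <= k.*2)%N ->
  word_mx (drop k w) (inord r) ord_max = (r == k.*2)%:R * (-1) ^+ d.
Proof.
elim: d k r => [|d IH] k r kd rk.
  rewrite addn0 in kd; rewrite kd drop_size /= expr0 mulr1 mxE -val_eqE /= inordK //.
  by rewrite -kd ltnS.
have kL : (k < L)%N by rewrite -kd addnS ltnS leq_addr.
have k2 : (k.*2.+2 <= m)%N by rewrite -doubleS leq_double.
have IH' := IH k.+1 _ (etrans (addSnnS k d) kd).
rewrite (drop_nth (0%N, false) kL) /= mxE (@big_ord_single _ _ _ (inord k.*2.+2)).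
  rewrite IH' ?doubleS // eqxx mul1r.
  case: (eqVneq r k.*2) => [->|Nr]; first by rewrite letter_mx_corner // exprS !mul1r.
  case: (eqVneq (letter_mx w`_k (inord r) (inord k.*2.+2)) 0) => [->|/band_letter_mx].
    by rewrite !mul0r.
  rewrite !inordK ?ltnS ?(leq_trans rk (leq_trans (leqnSn _) (ltnW k2))) // addn2 !ltnS.
  by move=> kr; case/negP: Nr; rewrite eqn_leq rk kr.
move=> t Nt; case: (leqP t k.*2.+2) => tk.
  rewrite -[t]inord_val (IH' t) ?doubleS // inord_val.
  suff /negbTE -> : (t : nat) != k.*2.+2 by rewrite mul0r mulr0.
  by apply: contra Nt => /eqP E; apply/eqP/val_inj; rewrite /= inordK // ltnS.
case: (eqVneq (letter_mx w`_k (inord r) t) 0) => [->|/band_letter_mx]; first by rewrite mul0r.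
rewrite inordK ?ltnS ?(leq_trans rk (leq_trans (leqnSn _) (ltnW k2))) // addn2.
by move/leq_trans/(_ (rk : r.+2 <= k.*2.+2)%N); rewrite leqNgt tk.
Qed.

End LetterMatrices.

Section Incidence.
Variables (X : Type) (le : X -> X -> Prop).
Hypothesis le_poset : is_poset le.
Local Notation lt := (lt le).

Lemma poset_refl x : le x x.
Proof. by case: le_poset => refl _; apply: refl. Qed.

Lemma poset_anti x y : le x y -> le y x -> x = y.
Proof. by case: le_poset => _ [anti _]; apply: anti. Qed.

Lemma poset_trans x y z : le x y -> le y z -> le x z.
Proof. by case: le_poset => _ [_ trans]; apply: trans. Qed.

Lemma le_lt_trans x y z : le x y -> lt y z -> lt x z.
Proof.
move=> xy [yz Nyz]; split; first exact: poset_trans xy yz.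
by move=> E; subst; apply: Nyz; apply: poset_anti.
Qed.

Lemma lt_le_trans x y z : lt x y -> le y z -> lt x z.
Proof.
move=> [xy Nxy] yz; split; first exact: poset_trans xy yz.
by move=> E; subst; apply: Nxy; apply: poset_anti.
Qed.

Fixpoint reach (k : nat) (x y : X) : Prop :=
  if k is k'.+1 then exists z, lt x z /\ reach k' z y else le x y.

Lemma reach_le k x y : reach k x y -> le x y.
Proof.
elim: k x => [|k IH] x //= [z [[xz _] /IH]]; exact: poset_trans.
Qed.

Lemma le_reach k x z y : le x z -> reach k z y -> reach k x y.
Proof.
case: k => [|k] /= xz; first exact: poset_trans.
by case=> w [zw wy]; exists w; split => //; exact: le_lt_trans xz zw.
Qed.

Lemma reach_add j k x z y : reach j x z -> reach k z y -> reach (j + k) x y.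
Proof.
elim: j x => [|j IH] x /=; first exact: le_reach.
by case=> w [xw wz] zy; exists w; split => //; apply: IH wz zy.
Qed.

Lemma reachS k x y : reach k.+1 x y -> reach k x y.
Proof.
elim: k x => [|k IH] x /= [z [xz zy]]; first exact: poset_trans (proj1 xz) zy.
by exists z; split => //; apply: IH.
Qed.

Lemma reach_leq j k x y : (j <= k)%N -> reach k x y -> reach j x y.
Proof.
move=> /subnKC <-; elim: (k - j)%N => [|d IH]; first by rewrite addn0.
by rewrite addnS => /reachS.
Qed.

Lemma reach_split j k x y : reach (j + k) x y -> exists z, reach j x z /\ reach k z y.
Proof.
elim: j x => [|j IH] x /=; first by exists x; split => //; exact: poset_refl.
by case=> w [xw /IH [z [wz zy]]]; exists z; split => //; exists w.
Qed.

Lemma reach_lt k x y : reach k.+1 x y -> lt x y.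
Proof. by case=> z [xz /reach_le]; exact: lt_le_trans. Qed.

Lemma reach_irr k x : ~ reach k.+1 x x.
Proof. by move/reach_lt => []. Qed.

Lemma lt_reach1 x y : lt x y -> reach 1 x y.
Proof. by move=> xy; exists y; split => //; exact: poset_refl. Qed.

Lemma reach_strict_seq k x y : reach k x y ->
  exists c : nat -> X, c 0%N = x /\ forall i, (i < k)%N -> lt (c i) (c i.+1).
Proof.
elim: k x => [|k IH] x /=; first by exists (fun _ => x).
case=> z [xz /IH [c [c0 Hc]]]; exists (fun i => if i is i'.+1 then c i' else x).
by split => // -[|i] Hi /=; [rewrite c0|exact: Hc].
Qed.

Definition chain (s : seq X) :=
  forall a b, List.In a s -> List.In b s -> le a b \/ le b a.

Lemma reach_chain k x y : reach k x y ->
  exists s : seq X, [/\ List.NoDup s, size s = k.+1, chain s &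
    forall e, List.In e s -> le x e].
Proof.
elim: k x => [|k IH] x /=.
  move=> _; exists [:: x]; split => //; first by constructor; [case|constructor].
    by move=> a b [<-|[]] [<-|[]]; left; apply: poset_refl.
  by move=> e [<-|[]]; apply: poset_refl.
case=> z [[xz Nxz] /IH [s [nd sz cs ge]]]; exists (x :: s); split => /=.
- by constructor => // xs; apply: Nxz; apply: poset_anti xz (ge _ xs).
- by rewrite sz.
- move=> a b [<-|Ha] [<-|Hb]; try by [left; apply: poset_refl|apply: cs].
  + by left; apply: poset_trans xz (ge _ Hb).
  + by right; apply: poset_trans xz (ge _ Ha).
- by move=> e [<-|/ge]; [apply: poset_refl|apply: poset_trans].
Qed.

Lemma bounded_no_reach : poset_bounded le -> exists N, forall x y, ~ reach N x y.
Proof.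
case=> N HN; exists N.+1 => x y /reach_chain [s [nd sz cs _]].
by have := HN s nd cs; rewrite sz ltnn.
Qed.

Lemma chain_min (s : seq X) : s <> [::] -> chain s ->
  exists m, List.In m s /\ forall e, List.In e s -> le m e.
Proof.
elim: s => [|a [|b s] IH] // _ cs.
  by exists a; split; [left|move=> e [<-|[]]; apply: poset_refl].
have [|m [ms mmin]] := IH _ (fun u v Hu Hv => cs u v (or_intror Hu) (or_intror Hv)) => //.
have [am|ma] := cs a m (or_introl erefl) (or_intror ms).
- exists a; split; first by left.
  by move=> e [<-|/mmin]; [apply: poset_refl|apply: poset_trans].
- by exists m; split; [right|move=> e [<-|/mmin]].
Qed.

Lemma chain_reach k (s : seq X) : List.NoDup s -> size s = k.+1 -> chain s ->
  exists x y, List.In x s /\ reach k x y.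
Proof.
elim: k s => [|k IH] s nd sz cs.
  by case: s sz {nd cs} => [|a s] // _; exists a, a; split; [left|apply: poset_refl].
have [|m [ms mmin]] := chain_min _ cs; first by case: s sz {nd cs}.
have [l1 [l2 E]] := List.in_split _ _ ms; subst s.
have [nd' Nm] := List.NoDup_remove _ _ _ nd.
have inc a : List.In a (l1 ++ l2)%list -> List.In a (l1 ++ m :: l2)%list.
  by move=> Ha; apply: List.in_or_app; case: (List.in_app_or _ _ _ Ha); [left|right; right].
have sz' : size (l1 ++ l2)%list = k.+1.
  have app_cat (l l' : seq X) : (l ++ l')%list = l ++ l' by elim: l => //= a l ->.
  by move: sz; rewrite !app_cat !size_cat /= addnS => -[].
have [x [y [Hx xy]]] := IH _ nd' sz' (fun a b Ha Hb => cs a b (inc a Ha) (inc b Hb)).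
exists m, y; split => //; exists x; split => //; split; first exact/mmin/inc.
by move=> E; subst; apply: Nm.
Qed.

Lemma unbounded_reach : ~ poset_bounded le -> forall k, exists x y, reach k x y.
Proof.
move=> unb k; apply: NNPP => Nk; apply: unb; exists k => s nd cs.
case Es: (size s) => [|j] //=; rewrite leqNgt; apply/negP => kj; apply: Nk.
have [x [y [_ xy]]] := chain_reach nd Es cs.
by exists x, y; apply: reach_leq xy; exact: ltnW.
Qed.

Lemma unbounded_strict_seq : ~ poset_bounded le -> forall k,
  exists c : nat -> X, forall i, (i < k)%N -> lt (c i) (c i.+1).
Proof.
move=> unb k; have [x [y /reach_strict_seq [c [_ Hc]]]] := unbounded_reach unb k.
by exists c.
Qed.

Variable K : fieldType.
Local Notation M := (mat K X).
Local Notation one := (@mone K X).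

Definition supported (a : M) := forall x y, a x y <> 0 -> le x y.

Lemma FI_supported (a : M) : FI le a -> supported a.
Proof. by move=> [a0 _] x y axy; apply: NNPP => Nxy; apply/axy/a0. Qed.

Lemma mone_diag x : one x x = 1.
Proof. by rewrite /mone; case: excluded_middle_informative. Qed.

Lemma mone_offdiag x y : x <> y -> one x y = 0.
Proof. by rewrite /mone; case: excluded_middle_informative. Qed.

Lemma mone_neq0 x y : one x y <> 0 -> x = y.
Proof. by move=> H; apply: NNPP => /mone_offdiag. Qed.

Lemma mat_ext (a b : M) : (forall x y, a x y = b x y) -> a = b.
Proof. by move=> ab; do 2 apply: functional_extensionality => ?; apply: ab. Qed.

Lemma mmul_neq0 (a b : M) x y :
  mmul a b x y <> 0 -> exists z, a x z <> 0 /\ b z y <> 0.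
Proof. by move/fsum_neq0 => [z /mulf_neq0_inv]; exists z. Qed.

Lemma madd_neq0 (a b : M) x y : madd a b x y <> 0 -> a x y <> 0 \/ b x y <> 0.
Proof.
rewrite /madd; case: (eqVneq (a x y) 0) => [->|/eqP]; last by left.
by rewrite add0r; right.
Qed.

Lemma mscale_neq0 k (a : M) x y : mscale k a x y <> 0 -> a x y <> 0.
Proof. by move/mulf_neq0_inv => []. Qed.

Lemma msub_neq0 (a b : M) x y : a x y <> b x y -> madd a (mscale (-1) b) x y <> 0.
Proof. by move=> ab E; apply: ab; apply/eqP; rewrite -subr_eq0 -mulN1r; apply/eqP. Qed.

Lemma supported_mmul (a b : M) : supported a -> supported b -> supported (mmul a b).
Proof. by move=> Sa Sb x y /mmul_neq0 [z [/Sa xz /Sb zy]]; apply: poset_trans xz zy. Qed.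

Lemma supported_mone : supported one.
Proof. by move=> x y /mone_neq0 ->; apply: poset_refl. Qed.

Lemma FI_mone : FI le one.
Proof.
split=> [x y Nxy|x y _]; first by apply: mone_offdiag => E; subst; apply/Nxy/poset_refl.
by exists [::] => u v _ [_ Nuv] _ []; apply: mone_offdiag.
Qed.

Lemma mmulm1 (a : M) : mmul a one = a.
Proof.
apply: mat_ext => x y; rewrite /mmul (@fsum_single _ _ _ y) ?mone_diag ?mulr1 //.
by move=> z Nzy; rewrite mone_offdiag ?mulr0.
Qed.

Lemma mmul1m (a : M) : mmul one a = a.
Proof.
apply: mat_ext => x y; rewrite /mmul (@fsum_single _ _ _ x) ?mone_diag ?mul1r //.
by move=> z Nzx; rewrite mone_offdiag ?mul0r // => E; apply: Nzx.
Qed.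

Lemma mmul_diag (a b : M) x : supported a -> supported b ->
  mmul a b x x = a x x * b x x.
Proof.
move=> Sa Sb; rewrite /mmul (@fsum_single _ _ _ x) // => z Nzx.
by apply: NNPP => /mulf_neq0_inv [/Sa xz /Sb zx]; apply/Nzx/poset_anti.
Qed.

Lemma FI_row_cover (a : M) x y : FI le a -> exists s, List.NoDup s /\
  forall z, a x z <> 0 -> le z y -> List.In z s.
Proof.
move=> [a0 fin]; case: (classic (lt x y)) => xy.
  have [L HL] := fin _ _ xy; have [s [nd cov]] := NoDup_cover (x :: map snd L).
  exists s; split => // z axz zy; apply: cov.
  case: (classic (z = x)) => [->|Nzx]; [by left|right].
  have xz : lt x z by split=> [|E]; [apply: NNPP => /a0|apply: Nzx].
  exact: (List.in_map snd L (x, z) (HL x z (poset_refl x) xz zy axz)).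
exists [:: x]; split; first by constructor; [case|constructor].
move=> z axz zy; left; apply: NNPP => Nxz; apply: xy.
by apply: lt_le_trans zy; split=> [|E]; [apply: NNPP => /a0|apply: Nxz].
Qed.

Lemma FI_col_cover (a : M) x y : FI le a -> exists s, List.NoDup s /\
  forall w, a w y <> 0 -> le x w -> List.In w s.
Proof.
move=> [a0 fin]; case: (classic (lt x y)) => xy.
  have [L HL] := fin _ _ xy; have [s [nd cov]] := NoDup_cover (y :: map fst L).
  exists s; split => // w awy xw; apply: cov.
  case: (classic (w = y)) => [->|Nwy]; [by left|right].
  have wy : lt w y by split=> [|E]; [apply: NNPP => /a0|apply: Nwy].
  exact: (List.in_map fst L (w, y) (HL w y xw wy (poset_refl y) awy)).
exists [:: y]; split; first by constructor; [case|constructor].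
move=> w awy xw; left; apply: NNPP => Nwy; apply: xy.
by apply: le_lt_trans xw _; split=> [|E]; [apply: NNPP => /a0|apply: Nwy].
Qed.

Lemma finite_support_mmul (a b : M) x y : FI le a -> supported b ->
  finite_support (fun z => a x z * b z y).
Proof.
move=> Fa Sb; have [s [_ Hs]] := FI_row_cover x y Fa.
by exists s => z /mulf_neq0_inv [axz /Sb]; apply: Hs.
Qed.

Lemma mmul_lincomb (a b c : M) k : FI le a -> supported b -> supported c ->
  mmul a (madd b (mscale k c)) = madd (mmul a b) (mscale k (mmul a c)).
Proof.
move=> Fa Sb Sc; apply: mat_ext => x y; rewrite /mmul /madd /mscale.
rewrite -fsum_lincomb; try exact: finite_support_mmul.
by apply: eq_fsum => z; rewrite mulrDr mulrCA.
Qed.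

Lemma mmulA (a b c : M) : FI le a -> FI le b -> FI le c ->
  mmul (mmul a b) c = mmul a (mmul b c).
Proof.
move=> Fa Fb Fc; have Sa := FI_supported Fa; have Sb := FI_supported Fb.
have Sc := FI_supported Fc; apply: mat_ext => x y; rewrite /mmul.
have [sz [ndz Hz]] := FI_row_cover x y Fa; have [sw [ndw Hw]] := FI_col_cover x y Fc.
have Ez w : fsum (fun z => a x z * b z w) * c w y = (\sum_(z <- sz) a x z * b z w) * c w y.
  case: (eqVneq (c w y) 0) => [->|/eqP cwy]; first by rewrite !mulr0.
  congr (_ * _); apply: fsumE => // z /mulf_neq0_inv [axz bzw].
  by apply: Hz => //; apply: poset_trans (Sb _ _ bzw) (Sc _ _ cwy).
have Ew z : a x z * fsum (fun w => b z w * c w y) = a x z * (\sum_(w <- sw) b z w * c w y).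
  case: (eqVneq (a x z) 0) => [->|/eqP axz]; first by rewrite !mul0r.
  congr (_ * _); apply: fsumE => // w /mulf_neq0_inv [bzw cwy].
  by apply: Hw => //; apply: poset_trans (Sa _ _ axz) (Sb _ _ bzw).
rewrite (eq_fsum Ez) (eq_fsum Ew) (fsumE ndw); last first.
  move=> w /mulf_neq0_inv [/big_neq0_In [z [_ /mulf_neq0_inv [axz bzw]]] cwy].
  by apply: Hw => //; apply: poset_trans (Sa _ _ axz) (Sb _ _ bzw).
rewrite (fsumE ndz); last first.
  move=> z /mulf_neq0_inv [axz /big_neq0_In [w [_ /mulf_neq0_inv [bzw cwy]]]].
  by apply: Hz => //; apply: poset_trans (Sb _ _ bzw) (Sc _ _ cwy).
under eq_bigr do rewrite mulr_suml.
rewrite exchange_big /=; apply: eq_bigr => z _.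
by rewrite mulr_sumr; apply: eq_bigr => w _; rewrite mulrA.
Qed.

Lemma FI_mmul (a b : M) : FI le a -> FI le b -> FI le (mmul a b).
Proof.
move=> Fa Fb; have Sa := FI_supported Fa; have Sb := FI_supported Fb.
split=> [x y Nxy|x y xy]; first by apply: NNPP => /(supported_mmul Sa Sb) /Nxy.
have [La HLa] := proj2 Fa _ _ xy; have [Lb HLb] := proj2 Fb _ _ xy.
pose pairs := [seq (pq.1.1, pq.2.2) | pq <- List.list_prod La Lb].
exists (La ++ Lb ++ pairs)%list => u v xu uv vy /mmul_neq0 [z [auz bzv]].
have uz := Sa _ _ auz; have zv := Sb _ _ bzv.
apply: List.in_or_app; case: (classic (u = z)) => [E|Nuz].
  by subst z; right; apply: List.in_or_app; left; apply: HLb.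
case: (classic (z = v)) => [E|Nzv]; first by subst z; left; apply: HLa.
right; apply: List.in_or_app; right.
have P1 : List.In (u, z) La by apply: HLa auz => //; apply: poset_trans zv vy.
have P2 : List.In (z, v) Lb by apply: HLb bzv => //; apply: poset_trans xu uz.
exact: (List.in_map (fun pq : (X * X) * (X * X) => (pq.1.1, pq.2.2)) _ ((u, z), (z, v))
          (List.in_prod _ _ _ _ P1 P2)).
Qed.

Definition filt (k : nat) (a : M) := forall x y, a x y <> 0 -> reach k x y.

Lemma filt_supported k (a : M) : filt k a -> supported a.
Proof. by move=> Fa x y /Fa /reach_le. Qed.

Lemma filt_mzero k : filt k (@mzero K X).
Proof. by move=> x y; rewrite /mzero. Qed.

Lemma filt_add k (a b : M) : filt k a -> filt k b -> filt k (madd a b).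
Proof. by move=> Fa Fb x y /madd_neq0 [/Fa|/Fb]. Qed.

Lemma filt_scale k c (a : M) : filt k a -> filt k (mscale c a).
Proof. by move=> Fa x y /mscale_neq0 /Fa. Qed.

Lemma filt_mul j k (a b : M) : filt j a -> filt k b -> filt (j + k) (mmul a b).
Proof. by move=> Fa Fb x y /mmul_neq0 [z [/Fa xz /Fb zy]]; apply: reach_add xz zy. Qed.

Lemma filt_span k S (a : M) : (forall b, S b -> filt k b) -> Defs.span S a -> filt k a.
Proof.
move=> FS; elim=> [|b /FS //|b c _ Fb _ Fc|c b _ Fb].
- exact: filt_mzero.
- exact: filt_add.
- exact: filt_scale.
Qed.

(* The diagonal of a commutator vanishes, since diagonal entries multiply like scalars. *)
Lemma filt_mcomm k (a b : M) : filt k a -> filt k b -> filt k.+1 (mcomm a b).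
Proof.
move=> Fa Fb x y H; case: (classic (x = y)) => [E|Nxy].
  subst y; exfalso; apply: H; rewrite /mcomm /madd /mscale.
  rewrite !mmul_diag; try exact: filt_supported Fa; try exact: filt_supported Fb.
  by rewrite mulrC mulN1r subrr.
have xy : reach (k + k) x y.
  by case/madd_neq0: H => [/(filt_mul Fa Fb)|/mscale_neq0 /(filt_mul Fb Fa)].
case: k {Fa Fb} xy => [|k] xy; first by apply: lt_reach1; split.
by apply: reach_leq xy; rewrite addSn ltnS leq_addl.
Qed.

Lemma filt_no_reach_eq0 N (a : M) : (forall x y, ~ reach N x y) -> filt N a -> a = @mzero K X.
Proof. by move=> NN Fa; apply: mat_ext => x y; apply: NNPP => /Fa /NN. Qed.

Lemma slie_der_filt n (c : M) : slie_der le n c -> filt n c.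
Proof.
elim: n c => [|n IH] c /=; first exact: FI_supported.
apply: filt_span => d [u [a [Hu [Fa ->]]]].
rewrite -(addn0 n.+1); apply: filt_mul; last exact: FI_supported.
by apply: filt_span Hu => e [p [q [Hp [Hq ->]]]]; apply: filt_mcomm; apply: IH.
Qed.

Lemma lie_der_slie_der n (c : M) : lie_der le n c -> slie_der le n c.
Proof.
elim: n c => [|n IH] c //=; elim=> [|b [p [q [Hp [Hq ->]]]]|b d _ Hb _ Hd|k b _ Hb].
- exact: span0.
- apply: spanS; exists (mcomm p q), one; split; last by split; [exact: FI_mone|rewrite mmulm1].
  by apply: spanS; exists p, q; split; [|split]; try apply: IH.
- exact: spanD.
- exact: spanZ.
Qed.

Definition emx (i j : X) : M :=
  fun x y => if excluded_middle_informative (x = i /\ y = j) then 1 else 0.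

Lemma emx_neq0 i j x y : emx i j x y <> 0 -> x = i /\ y = j.
Proof. by rewrite /emx; case: excluded_middle_informative. Qed.

Lemma emxE i j : emx i j i j = 1.
Proof. by rewrite /emx; case: excluded_middle_informative => // -[]. Qed.

Lemma emx_off i j x y : ~ (x = i /\ y = j) -> emx i j x y = 0.
Proof. by rewrite /emx; case: excluded_middle_informative. Qed.

Lemma FI_emx i j : le i j -> FI le (emx i j).
Proof.
move=> ij; split=> [x y Nxy|x y _].
  by apply: NNPP => /emx_neq0 [Ex Ey]; apply: Nxy; rewrite Ex Ey.
by exists [:: (i, j)] => u v _ _ _ /emx_neq0 [-> ->]; left.
Qed.

Lemma mcomm_emx i j k : i <> k -> mcomm (emx i j) (emx j k) = emx i k.
Proof.
move=> Nik; apply: mat_ext => x y; rewrite /mcomm /madd /mscale.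
have -> : mmul (emx j k) (emx i j) x y = 0.
  apply: fsum_eq0 => z; apply: NNPP => /mulf_neq0_inv [/emx_neq0 [_ E1] /emx_neq0 [E2 _]].
  by apply: Nik; rewrite -E1 -E2.
rewrite mulr0 addr0 /mmul (@fsum_single _ _ _ j); last first.
  by move=> z Nzj; apply: NNPP => /mulf_neq0_inv [/emx_neq0 [_ E] _]; apply: Nzj.
case: (classic (x = i)) => [->|Nx].
  case: (classic (y = k)) => [->|Ny]; first by rewrite !emxE mulr1.
  by rewrite (@emx_off j k j y) ?(@emx_off i k i y) ?mulr0 // => -[_ /Ny].
by rewrite (@emx_off i j x j) ?(@emx_off i k x y) ?mul0r // => -[/Nx].
Qed.

Lemma lie_der_emx n i k : reach (2 ^ n) i k -> lie_der le n (emx i k).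
Proof.
elim: n i k => [|n IH] i k; first by move/reach_le/FI_emx.
rewrite expnS mul2n -addnn => /reach_split [j [ij jk]].
have n0 : (0 < 2 ^ n)%N by rewrite expn_gt0.
have [ij' jk'] : lt i j /\ lt j k.
  by move: ij jk; rewrite -(ltn_predK n0) => /reach_lt ? /reach_lt.
have Nik : i <> k.
  by move=> E; subst k; apply: (proj2 ij'); apply: poset_anti (proj1 ij') (proj1 jk').
rewrite -(mcomm_emx j Nik); apply: spanS; exists (emx i j), (emx j k).
by split; [|split]; try apply: IH.
Qed.

Lemma mmul_no_reach k (c W : M) x y : supported c -> filt k W -> ~ reach k.+1 x y ->
  mmul c W x y = c x x * W x y.
Proof.
move=> Sc FW Nxy; rewrite /mmul (@fsum_single _ _ _ x) // => z Nzx.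
apply: NNPP => /mulf_neq0_inv [cxz /FW zy]; apply: Nxy; exists z; split => //.
by split; [exact: Sc|move=> E; apply: Nzx].
Qed.

Lemma filt_mcomm_mul k (a b Z : M) : supported a -> supported b -> filt k Z ->
  filt k.+1 (madd (mmul a (mmul b Z)) (mscale (-1) (mmul b (mmul a Z)))).
Proof.
move=> Sa Sb FZ x y H; apply: NNPP => Nxy; apply: H.
have FbZ : filt k (mmul b Z) by exact: (@filt_mul 0 _ _ _ Sb FZ).
have FaZ : filt k (mmul a Z) by exact: (@filt_mul 0 _ _ _ Sa FZ).
rewrite /madd /mscale (mmul_no_reach Sa FbZ Nxy) (mmul_no_reach Sb FaZ Nxy).
by rewrite (mmul_no_reach Sb FZ Nxy) (mmul_no_reach Sa FZ Nxy); ring.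
Qed.

Section PolynomialIdentity.
Variable a : nat -> M.
Hypothesis FI_a : forall i, FI le (a i).

(* For [Z = one] these are [mword a] and [ncpoly_eval _ a]; the right factor [Z]
   lets the induction on [commutator_poly] peel commutators off on the right. *)
Definition mword_on (w : seq nat) (Z : M) : M := foldr (fun i acc => mmul (a i) acc) Z w.
Definition ncpoly_eval_on (f : seq (K * seq nat)) (Z : M) : M :=
  foldr (fun p acc => madd (mscale p.1 (mword_on p.2 Z)) acc) (@mzero K X) f.

Lemma mword_on_cat w v Z : mword_on (w ++ v) Z = mword_on w (mword_on v Z).
Proof. exact: foldr_cat. Qed.

Lemma ncpoly_eval_on_cat f g Z :
  ncpoly_eval_on (f ++ g) Z = madd (ncpoly_eval_on f Z) (ncpoly_eval_on g Z).
Proof.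
elim: f => [|p f IH] /=; first by apply: mat_ext => x y; rewrite /madd /mzero add0r.
by rewrite IH; apply: mat_ext => x y; rewrite /madd addrA.
Qed.

Lemma ncpoly_eval_on_catr f v Z :
  ncpoly_eval_on [seq (p.1, p.2 ++ v) | p <- f] Z = ncpoly_eval_on f (mword_on v Z).
Proof. by elim: f => [|p f IH] //=; rewrite IH mword_on_cat. Qed.

Lemma ncpoly_eval_on_oppr_catr f v Z :
  ncpoly_eval_on [seq (- p.1, p.2 ++ v) | p <- f] Z =
  mscale (-1) (ncpoly_eval_on f (mword_on v Z)).
Proof.
elim: f => [|p f IH] /=; first by apply: mat_ext => x y; rewrite /mscale /mzero mulr0.
by rewrite IH mword_on_cat; apply: mat_ext => x y; rewrite /madd /mscale; ring.
Qed.

Lemma supported_mword_on w Z : supported Z -> supported (mword_on w Z).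
Proof. by move=> SZ; elim: w => //= i w IH; apply: supported_mmul (FI_supported _) IH. Qed.

Lemma mword_on_lincomb w Y Z : supported Y -> supported Z ->
  mword_on w (madd Y (mscale (-1) Z)) = madd (mword_on w Y) (mscale (-1) (mword_on w Z)).
Proof.
move=> SY SZ; elim: w => [|i w IH] //=.
by rewrite IH mmul_lincomb //; apply: supported_mword_on.
Qed.

Lemma ncpoly_eval_on_lincomb f Y Z : supported Y -> supported Z ->
  ncpoly_eval_on f (madd Y (mscale (-1) Z)) =
  madd (ncpoly_eval_on f Y) (mscale (-1) (ncpoly_eval_on f Z)).
Proof.
move=> SY SZ; elim: f => [|p f IH] /=.
  by apply: mat_ext => x y; rewrite /madd /mscale /mzero; ring.
by rewrite IH mword_on_lincomb //; apply: mat_ext => x y; rewrite /madd /mscale; ring.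
Qed.

End PolynomialIdentity.

(* The product of commutators [x_0, x_1] [x_2, x_3] ... [x_(2n-2), x_(2n-1)], expanded. *)
Fixpoint commutator_poly (n : nat) : seq (K * seq nat) :=
  if n is n'.+1 then
    [seq (p.1, p.2 ++ [:: n'.*2; n'.*2.+1]) | p <- commutator_poly n'] ++
    [seq (- p.1, p.2 ++ [:: n'.*2.+1; n'.*2]) | p <- commutator_poly n']
  else [:: (1, [::])].

Lemma filt_commutator_poly (a : nat -> M) n j Z : (forall i, FI le (a i)) ->
  filt j Z -> filt (j + n) (ncpoly_eval_on a (commutator_poly n) Z).
Proof.
move=> FI_a; elim: n j Z => [|n IH] j Z FZ /=.
  by rewrite addn0; apply: filt_add; [apply: filt_scale|apply: filt_mzero].
have SZ w : supported (mword_on a w Z).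
  by apply: supported_mword_on => //; exact: filt_supported FZ.
rewrite ncpoly_eval_on_cat ncpoly_eval_on_catr ncpoly_eval_on_oppr_catr.
rewrite -ncpoly_eval_on_lincomb // -addSnnS; apply: IH.
by apply: filt_mcomm_mul => //; apply: FI_supported.
Qed.

Lemma commutator_poly_nonzero n : ncpoly_nonzero (commutator_poly n).
Proof.
rewrite /ncpoly_nonzero; elim: n => [|n IH] /=; first by rewrite oner_eq0.
move/and3P: IH => [nil_f uniq_f coef_f].
have map_catr (c : K -> K) (f : seq (K * seq nat)) v :
    [seq q.2 | q <- [seq (c p.1, p.2 ++ v) | p <- f]] = [seq w ++ v | w <- map snd f].
  by elim: f => //= p f ->.
have catr_inj v : injective (fun w : seq nat => w ++ v).
  move=> w1 w2 E; have sz : size w1 = size w2.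
    by move/(congr1 size): E; rewrite !size_cat => /addIn.
  by move/eqP: E; rewrite eqseq_cat // eqxx andbT => /eqP.
apply/and3P; split.
- by case: (commutator_poly n) nil_f.
- rewrite map_cat (map_catr id) (map_catr -%R) cat_uniq.
  rewrite !(map_inj_uniq (catr_inj _)) uniq_f andbT /=.
  (* The monomials of the two halves end in letters of different parity. *)
  apply/hasPn => _ /mapP [w2 _ ->]; apply/negP => /mapP [w1 _].
  by move/(congr1 (odd \o last 0%N)); rewrite /= !last_cat /= !odd_double.
- rewrite all_cat !all_map; apply/andP; split; apply/allP => p /(allP coef_f) //=.
  by rewrite oppr_eq0.
Qed.

Definition ufilt k (a : M) := forall x y, a x y <> one x y -> reach k x y.

Lemma ufilt_diag k (a : M) x : ufilt k.+1 a -> a x x = 1.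
Proof.
by move=> Ua; apply: NNPP => axx; apply: (@reach_irr k x); apply: Ua; rewrite mone_diag.
Qed.

Lemma ufilt_offdiag k (a : M) x y : ufilt k a -> x <> y -> a x y <> 0 -> reach k x y.
Proof. by move=> Ua Nxy axy; apply: Ua; rewrite mone_offdiag. Qed.

Lemma ufilt_supported k (a : M) : ufilt k a -> supported a.
Proof.
move=> Ua x y axy; case: (classic (x = y)) => [->|Nxy]; first exact: poset_refl.
exact: reach_le (ufilt_offdiag Ua Nxy axy).
Qed.

Lemma ufilt_mul k (a b : M) : ufilt k.+1 a -> ufilt k.+1 b -> ufilt k.+1 (mmul a b).
Proof.
move=> Ua Ub x y H; apply: NNPP => Nxy; apply: H; rewrite /mmul (@fsum_single _ _ _ x).
  by rewrite (ufilt_diag _ Ua) mul1r; apply: NNPP => /Ub.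
move=> z Nzx; apply: NNPP => /mulf_neq0_inv [axz bzy]; apply: Nxy.
have xz : reach k.+1 x z by apply: ufilt_offdiag Ua _ axz => E; apply: Nzx.
case: (classic (z = y)) => [<- //|Nzy].
by apply: reach_leq (reach_add xz (ufilt_offdiag Ub Nzy bzy)); apply: leq_addr.
Qed.

(* From b - 1 = b (1 - a). *)
Lemma ufilt_inv k (a b : M) : ufilt k a -> inverse_pair le a b -> ufilt k b.
Proof.
move=> Ua [Fa [Fb [_ ba]]] x y /msub_neq0.
have -> : madd b (mscale (-1) one) = mmul b (madd one (mscale (-1) a)).
  by rewrite mmul_lincomb ?mmulm1 ?ba //; [exact: supported_mone|exact: FI_supported].
move=> /mmul_neq0 [z [bxz azy]]; apply: le_reach (FI_supported Fb bxz) _.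
by apply: Ua => E; apply: azy; rewrite /madd /mscale E; ring.
Qed.

Lemma ufilt1_gcomm (x y x' y' : M) : inverse_pair le x x' -> inverse_pair le y y' ->
  ufilt 1 (mmul (mmul (mmul x' y') x) y).
Proof.
move=> [Fx [Fx' [_ xx]]] [Fy [Fy' [_ yy]]] u v H.
have [Sx Sy] := (FI_supported Fx, FI_supported Fy).
have [Sx' Sy'] := (FI_supported Fx', FI_supported Fy').
have S : supported (mmul (mmul x' y') x) by do 2 apply: supported_mmul => //.
case: (classic (u = v)) => [E|Nuv]; last first.
  by apply: lt_reach1; split=> //; apply: supported_mmul S Sy _ _ _; rewrite mone_offdiag in H.
subst v; exfalso; apply: H; rewrite mone_diag !mmul_diag //; try exact: supported_mmul.
have ex : x' u u * x u u = 1 by rewrite -mmul_diag // xx mone_diag.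
have ey : y' u u * y u u = 1 by rewrite -mmul_diag // yy mone_diag.
by rewrite -[RHS]mulr1 -{1}ex -ey; ring.
Qed.

(* xy - x - y + 1 = (x - 1)(y - 1) vanishes away from chains of length 2k + 2. *)
Lemma mmul_ufilt_shallow k (x y : M) u v :
  ufilt k.+1 x -> ufilt k.+1 y -> ~ reach (k.+1 + k.+1) u v ->
  mmul x y u v = x u v + y u v - one u v.
Proof.
move=> Ux Uy Nuv; case: (classic (u = v)) => [<-|Nuv'].
  rewrite mmul_diag; try exact: ufilt_supported Ux; try exact: ufilt_supported Uy.
  by rewrite (ufilt_diag _ Ux) (ufilt_diag _ Uy) mone_diag mulr1 addrK.
rewrite /mmul (@fsumE _ _ _ [:: u; v]).
- by rewrite !big_cons big_nil (ufilt_diag _ Ux) (ufilt_diag _ Uy) mone_offdiag //; ring.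
- by constructor; [case=> // E; apply: Nuv'|constructor; [case|constructor]].
- move=> z /mulf_neq0_inv [xuz yzv]; apply: NNPP => Nz; apply: Nuv.
  have Nuz : u <> z by move=> E; apply: Nz; left.
  have Nzv : z <> v by move=> E; apply: Nz; right; left.
  exact: reach_add (ufilt_offdiag Ux Nuz xuz) (ufilt_offdiag Uy Nzv yzv).
Qed.

Lemma filt_msub_ufilt k (x y : M) : ufilt k.+1 x -> ufilt k.+1 y ->
  filt k.+2 (madd (mmul x y) (mscale (-1) (mmul y x))).
Proof.
move=> Ux Uy u v H; apply: NNPP => Nuv; apply: H.
have Nuv' : ~ reach (k.+1 + k.+1) u v.
  by move=> R; apply/Nuv/(reach_leq _ R); rewrite addSn addnS !ltnS leq_addr.
by rewrite /madd /mscale (mmul_ufilt_shallow Ux Uy Nuv') (mmul_ufilt_shallow Uy Ux Nuv'); ring.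
Qed.

(* From x^-1 y^-1 x y - 1 = x^-1 y^-1 (xy - yx). *)
Lemma ufiltS_gcomm k (x y x' y' : M) : ufilt k.+1 x -> ufilt k.+1 y ->
  inverse_pair le x x' -> inverse_pair le y y' ->
  ufilt k.+2 (mmul (mmul (mmul x' y') x) y).
Proof.
move=> Ux Uy [Fx [Fx' [_ xx]]] [Fy [Fy' [_ yy]]].
have Fxy' : FI le (mmul x' y') by apply: FI_mmul.
have inv_yx : mmul (mmul x' y') (mmul y x) = one.
  rewrite mmulA //; last exact: FI_mmul.
  by rewrite -(mmulA Fy' Fy Fx) yy mmul1m xx.
have E : madd (mmul (mmul (mmul x' y') x) y) (mscale (-1) one) =
         mmul (mmul x' y') (madd (mmul x y) (mscale (-1) (mmul y x))).
  rewrite mmul_lincomb ?inv_yx ?(mmulA Fxy') //.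
  1,2: by apply: supported_mmul; apply: FI_supported.
move=> u v /msub_neq0; rewrite E.
exact: (@filt_mul 0 _ _ _ (FI_supported Fxy') (filt_msub_ufilt Ux Uy)).
Qed.

Lemma unit_der_ufilt n (c : M) : unit_der le n.+1 c -> ufilt n.+1 c.
Proof.
elim: n c => [|n IH] c /=;
  elim=> [|a [x [y [x' [y' [Ux [Uy [xx [yy ->]]]]]]]]|a b _ Ua _ Ub|a b _ Ua ab].
- by [].
- exact: ufilt1_gcomm xx yy.
- exact: ufilt_mul.
- exact: ufilt_inv Ua ab.
- by [].
- exact: ufiltS_gcomm (IH _ Ux) (IH _ Uy) xx yy.
- exact: ufilt_mul.
- exact: ufilt_inv Ua ab.
Qed.

Lemma bounded_strongly_lie_solvable : poset_bounded le -> FI_strongly_lie_solvable K le.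
Proof.
by case/bounded_no_reach => N NN; exists N => c /slie_der_filt; apply: filt_no_reach_eq0.
Qed.

Lemma strongly_lie_solvable_lie_solvable :
  FI_strongly_lie_solvable K le -> FI_lie_solvable K le.
Proof. by case=> n Hn; exists n => c /lie_der_slie_der /Hn. Qed.

Lemma lie_solvable_bounded : FI_lie_solvable K le -> poset_bounded le.
Proof.
case=> n Hn; apply: NNPP => /unbounded_reach /(_ (2 ^ n)%N) [i [k /lie_der_emx /Hn]].
by move/(congr1 (fun f => f i k)); rewrite emxE; apply/eqP; apply: oner_neq0.
Qed.

Lemma bounded_PI : poset_bounded le -> FI_PI K le.
Proof.
case/bounded_no_reach => N NN; exists (commutator_poly N).
split=> [|a FI_a]; first exact: commutator_poly_nonzero.
apply: (filt_no_reach_eq0 NN); rewrite -(add0n N).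
by apply: filt_commutator_poly => //; exact: supported_mone.
Qed.

Lemma bounded_units_solvable : poset_bounded le -> units_solvable K le.
Proof.
case/bounded_no_reach => N NN; exists N.+1 => c /unit_der_ufilt Uc.
by apply: mat_ext => x y; apply: NNPP => /Uc /reachS /NN.
Qed.

Section UnitWords.
Variables g h : nat -> M.
Hypothesis inverse_gh : forall i, inverse_pair le (g i) (h i).

Definition letter_val (l : nat * bool) := if l.2 then h l.1 else g l.1.

Lemma FI_letter_val l : FI le (letter_val l).
Proof. by rewrite /letter_val; case: l.2; have [? [? _]] := inverse_gh l.1. Qed.

Lemma letter_val_inv l : mmul (letter_val (letter_inv l)) (letter_val l) = one.
Proof. by rewrite /letter_val /=; case: l.2; have [_ [_ []]] := inverse_gh l.1. Qed.

Lemma FI_gword w : FI le (gword g h w).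
Proof.
by elim: w => [|l w IH] /=; [exact: FI_mone|apply: FI_mmul IH; apply: FI_letter_val].
Qed.

Lemma gword_cat w1 w2 : gword g h (w1 ++ w2) = mmul (gword g h w1) (gword g h w2).
Proof.
elim: w1 => [|l w1 IH] /=; first by rewrite mmul1m.
by rewrite IH -mmulA //; [exact: FI_letter_val|exact: FI_gword|exact: FI_gword].
Qed.

Lemma inverse_pair_gword w : inverse_pair le (gword g h w) (gword g h (word_inv w)).
Proof.
do 2 (split; first exact: FI_gword).
elim: w => [|l w [IH1 IH2]]; first by rewrite /= mmul1m.
have -> : gword g h (l :: w) = mmul (letter_val l) (gword g h w) by [].
have -> : gword g h (word_inv (l :: w)) =
          mmul (gword g h (word_inv w)) (letter_val (letter_inv l)).
  by rewrite /word_inv /= rev_cons -cats1 gword_cat /= mmulm1.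
have [F1 F2] := (FI_gword w, FI_gword (word_inv w)).
have [F3 F4] := (FI_letter_val l, FI_letter_val (letter_inv l)).
split.
- rewrite (mmulA F3 F1 (FI_mmul F2 F4)) -(mmulA F1 F2 F4) IH1 mmul1m.
  by rewrite -{1}(letter_invK l) letter_val_inv.
- by rewrite (mmulA F2 F4 (FI_mmul F3 F1)) -(mmulA F4 F3 F1) letter_val_inv mmul1m.
Qed.

Lemma unit_der_derived_word k off : unit_der le k (gword g h (derived_word k off)).
Proof.
elim: k off => [|k IH] off /=; first by rewrite mmulm1; exists (h off).
rewrite !gword_cat; set A := derived_word k off; set B := derived_word k (off + 2 ^ k).
have [FA FB] := (FI_gword A, FI_gword B).
have [FA' FB'] := (FI_gword (word_inv A), FI_gword (word_inv B)).
apply: gs_base; exists (gword g h A), (gword g h B).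
exists (gword g h (word_inv A)), (gword g h (word_inv B)).
do 4 (split; first by [exact: IH|exact: inverse_pair_gword]).
by rewrite (mmulA (FI_mmul FA' FB') FA FB) (mmulA FA' FB' (FI_mmul FA FB)).
Qed.

End UnitWords.

Lemma units_solvable_group_identity : units_solvable K le -> units_group_identity K le.
Proof.
case=> n Hn; exists (derived_word n 0); split; first exact: derived_word_neq_nil.
by split=> [|g h gh]; [exact: derived_word_reduced|apply/Hn/unit_der_derived_word].
Qed.

Section ChainEmbedding.
Variables (n : nat) (c : nat -> X).
Hypothesis c_incr : forall k, (k < n)%N -> lt (c k) (c k.+1).
Local Notation MX := 'M[K]_n.+1.

Lemma chain_lt i j : (i < j)%N -> (j <= n)%N -> lt (c i) (c j).
Proof.
elim: j => [|j IH] // ij jn; move: ij; rewrite ltnS leq_eqVlt => /orP [/eqP ->|ij].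
  exact: c_incr.
exact: lt_le_trans (IH ij (ltnW jn)) (proj1 (c_incr jn)).
Qed.

Lemma chain_le i j : (i <= j)%N -> (j <= n)%N -> le (c i) (c j).
Proof.
rewrite leq_eqVlt => /orP [/eqP ->|ij] jn; first exact: poset_refl.
exact: proj1 (chain_lt ij jn).
Qed.

Lemma chain_inj : injective (fun p : 'I_n.+1 => c p).
Proof.
move=> p q E; apply: val_inj => /=.
case: (ltngtP p q) => // pq.
- by case: (chain_lt pq (ltnSE (ltn_ord q))); rewrite E.
- by case: (chain_lt pq (ltnSE (ltn_ord p))); rewrite E.
Qed.

Definition on_chain x := exists p : 'I_n.+1, c p = x.

Definition chain_index (x : X) : 'I_n.+1 :=
  match excluded_middle_informative (on_chain x) with
  | left H => proj1_sig (constructive_indefinite_description _ H)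
  | right _ => ord0
  end.

Lemma chain_indexK (p : 'I_n.+1) : chain_index (c p) = p.
Proof.
rewrite /chain_index; case: excluded_middle_informative => [H|[]]; last by exists p.
by case: (constructive_indefinite_description _ H) => q /= cq; apply: chain_inj.
Qed.

(* The identity off the chain, so that [chain_embed] is a unital ring morphism. *)
Definition chain_embed (A : MX) : M := fun x y =>
  if excluded_middle_informative (on_chain x) then
    if excluded_middle_informative (on_chain y) then A (chain_index x) (chain_index y)
    else 0
  else one x y.

Lemma chain_embed_on (A : MX) (p q : 'I_n.+1) : chain_embed A (c p) (c q) = A p q.
Proof.
rewrite /chain_embed; case: excluded_middle_informative => [?|[]]; last by exists p.
case: excluded_middle_informative => [?|[]]; last by exists q.
by rewrite !chain_indexK.
Qed.

Lemma chain_embed_on_off (A : MX) (p : 'I_n.+1) y :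
  ~ on_chain y -> chain_embed A (c p) y = 0.
Proof.
move=> Ny; rewrite /chain_embed; case: excluded_middle_informative => [?|[]]; last by exists p.
by case: excluded_middle_informative.
Qed.

Lemma chain_embed_off (A : MX) x y : ~ on_chain x -> chain_embed A x y = one x y.
Proof. by move=> Nx; rewrite /chain_embed; case: excluded_middle_informative. Qed.

Lemma chain_embed_mul (A B : MX) :
  mmul (chain_embed A) (chain_embed B) = chain_embed (A *m B).
Proof.
apply: mat_ext => x y; case: (classic (on_chain x)) => [[p <-]|Nx]; last first.
  rewrite !chain_embed_off // /mmul.
  rewrite (@fsum_single _ _ _ x) ?chain_embed_off ?mone_diag ?mul1r //.
  by move=> z Nzx; rewrite chain_embed_off // mone_offdiag ?mul0r // => E; apply: Nzx.
rewrite /mmul (@fsum_image _ _ _ (fun r : 'I_n.+1 => c r)); first last.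
- move=> z /mulf_neq0_inv [Hz _]; apply: NNPP => Nz.
  by apply: Hz; rewrite chain_embed_on_off.
- exact: chain_inj.
case: (classic (on_chain y)) => [[q <-]|Ny].
  by rewrite chain_embed_on mxE; apply: eq_bigr => r _; rewrite !chain_embed_on.
by rewrite chain_embed_on_off // big1 // => r _; rewrite (@chain_embed_on_off B) ?mulr0.
Qed.

Lemma chain_embed1 : chain_embed 1%:M = one.
Proof.
apply: mat_ext => x y.
case: (classic (on_chain x)) => [[p <-]|Nx]; last exact: chain_embed_off.
case: (classic (on_chain y)) => [[q <-]|Ny].
  rewrite chain_embed_on mxE; case: eqVneq => [->|Npq]; first by rewrite mone_diag.
  by rewrite mone_offdiag // => /chain_inj E; rewrite E eqxx in Npq.
by rewrite chain_embed_on_off // mone_offdiag // => E; apply: Ny; exists p.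
Qed.

Lemma FI_chain_embed (A : MX) : upper_mx A -> FI le (chain_embed A).
Proof.
move=> UA; split=> [x y Nxy|x y _].
  apply: NNPP => H; apply: Nxy; case: (classic (on_chain x)) => [[p Ep]|Nx]; last first.
    by rewrite chain_embed_off // in H; rewrite (mone_neq0 H); apply: poset_refl.
  subst x; case: (classic (on_chain y)) => [[q Eq]|Ny]; last by rewrite chain_embed_on_off in H.
  by subst y; rewrite chain_embed_on in H; apply: chain_le; [apply/UA/eqP|rewrite -ltnS].
pose L := [seq c r | r : 'I_n.+1 <- index_enum 'I_n.+1].
have inL (r : 'I_n.+1) : List.In (c r) L by apply/List.in_map/mem_In/mem_index_enum.
exists (List.list_prod L L) => u v _ [_ Nuv] _ H.
have [p Ep] : on_chain u.
  by apply: NNPP => Nu; apply: H; rewrite chain_embed_off // mone_offdiag.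
subst u; have [q <-] : on_chain v by apply: NNPP => Nv; apply: H; rewrite chain_embed_on_off.
exact: List.in_prod.
Qed.

Lemma inverse_pair_chain_embed (A B : MX) : upper_mx A -> upper_mx B ->
  A *m B = 1%:M -> B *m A = 1%:M -> inverse_pair le (chain_embed A) (chain_embed B).
Proof.
move=> UA UB AB BA; do 2 (split; first exact: FI_chain_embed).
by rewrite !chain_embed_mul AB BA chain_embed1.
Qed.

End ChainEmbedding.

Section PolynomialWitness.
Variables (w0 : seq nat) (c : nat -> X).
Hypothesis c_incr : forall k, (k < size w0)%N -> lt (c k) (c k.+1).
Local Notation m := (size w0).

Definition shift_val (i : nat) : M := chain_embed c (shift_mx K w0 i).

Lemma FI_shift_val i : FI le (shift_val i).
Proof. exact/FI_chain_embed/upper_shift_mx. Qed.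

Lemma ncpoly_eval_shift_corner f :
  ncpoly_eval f shift_val (c 0%N) (c m) = \sum_(p <- f) p.1 * (p.2 == w0)%:R.
Proof.
have mword_shift w : mword shift_val w = chain_embed c (shift_word_mx K w0 w).
  elim: w => [|i w IH] /=; first by rewrite chain_embed1.
  by rewrite /mword /= -/(mword shift_val w) IH /shift_val chain_embed_mul.
have corner w : mword shift_val w (c 0%N) (c m) = (w == w0)%:R.
  have -> : c 0%N = c (@inord m 0) by rewrite inordK.
  rewrite -[c m]/(c (@ord_max m)).
  by rewrite mword_shift (chain_embed_on c_incr) (shift_word_mx_corner K w (leq0n _)) drop0.
elim: f => [|p f IH]; first by rewrite big_nil.
by rewrite /= /madd /mscale IH big_cons corner.
Qed.

End PolynomialWitness.

Lemma PI_bounded : FI_PI K le -> poset_bounded le.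
Proof.
case=> -[|[c0 w0] f] [nz PI]; first by case/and3P: nz.
case/and3P: nz => _ /andP [w0_f _] /andP [/eqP c0_neq0 _].
apply: NNPP => /unbounded_strict_seq /(_ (size w0)) [c c_incr].
have : ncpoly_eval ((c0, w0) :: f) (shift_val w0 c) (c 0%N) (c (size w0)) = 0.
  by rewrite PI //; exact: FI_shift_val.
rewrite ncpoly_eval_shift_corner // big_cons eqxx mulr1 big1_seq ?addr0 //.
move=> p /= /(map_f snd) p_f; case: eqP => [E|]; last by rewrite mulr0.
by rewrite -E p_f in w0_f.
Qed.

Section GroupIdentityWitness.
Variables (w : seq (nat * bool)) (c : nat -> X).
Hypotheses (w_reduced : reduced_word w) (w_neq_nil : w != [::]).
Hypothesis c_incr : forall k, (k < (size w).*2)%N -> lt (c k) (c k.+1).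

Definition letter_gen (i : nat) : M := chain_embed c (letter_mx K w (i, false)).
Definition letter_gen_inv (i : nat) : M := chain_embed c (letter_mx K w (i, true)).

Lemma inverse_pair_letter_gen i : inverse_pair le (letter_gen i) (letter_gen_inv i).
Proof.
apply: (inverse_pair_chain_embed c_incr); try exact: upper_letter_mx.
- exact: (letter_mx_inv K w_reduced (i, false)).
- exact: (letter_mx_inv K w_reduced (i, true)).
Qed.

Lemma gword_letter_gen s :
  gword letter_gen letter_gen_inv s = chain_embed c (word_mx K w s).
Proof.
elim: s => [|[i b] s IH] /=; first by rewrite chain_embed1.
by rewrite /gword /= -/(gword _ _ s) IH -chain_embed_mul //; case: b.
Qed.

Lemma gword_letter_gen_neq1 : gword letter_gen letter_gen_inv w <> one.
Proof.
rewrite gword_letter_gen => /(congr1 (fun a => a (c 0%N) (c (size w).*2))).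
have -> : c 0%N = c (@inord (size w).*2 0) by rewrite inordK.
rewrite -[c (size w).*2]/(c ord_max) (chain_embed_on c_incr).
rewrite -[w in word_mx _ _ w]drop0 (word_mx_corner K (add0n _) (leqnn _)) eqxx mul1r.
rewrite mone_offdiag; first by move/eqP; rewrite signr_eq0.
move/(chain_inj c_incr)/(congr1 val)/eqP; rewrite /= inordK //.
by rewrite eq_sym double_eq0 size_eq0 (negbTE w_neq_nil).
Qed.

End GroupIdentityWitness.

Lemma group_identity_bounded : units_group_identity K le -> poset_bounded le.
Proof.
case=> w [w_neq_nil [w_reduced GI]]; apply: NNPP.
move=> /unbounded_strict_seq /(_ (size w).*2) [c c_incr].
apply: (gword_letter_gen_neq1 w_neq_nil c_incr); apply: GI.
exact: inverse_pair_letter_gen w_reduced c_incr.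
Qed.

End Incidence.

Theorem theorem1p3 (K : fieldType) (X : Type) (le : X -> X -> Prop) :
  is_poset le ->
  [<-> FI_PI K le;
       FI_lie_solvable K le;
       FI_strongly_lie_solvable K le;
       units_group_identity K le;
       units_solvable K le;
       poset_bounded le].
Proof.
move=> le_poset.
have PI_bnd := @PI_bounded _ _ le_poset K.
have lie_bnd := @lie_solvable_bounded _ _ le_poset K.
have gid_bnd := @group_identity_bounded _ _ le_poset K.
have bnd_PI := @bounded_PI _ _ le_poset K.
have bnd_slie := @bounded_strongly_lie_solvable _ _ le_poset K.
have bnd_units := @bounded_units_solvable _ _ le_poset K.
have slie_lie := @strongly_lie_solvable_lie_solvable _ _ le_poset K.
have units_gid := @units_solvable_group_identity _ _ le_poset K.
tfae.
- by move/PI_bnd/bnd_slie/slie_lie.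
- by move/lie_bnd/bnd_slie.
- by move/slie_lie/lie_bnd/bnd_units/units_gid.
- by move/gid_bnd/bnd_units.
- by move/units_gid/gid_bnd.
- exact: bnd_PI.
Qed.
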